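(* Let $A\in M_{r\times m}(\mathbb{Z})$ have rank $r<m$, let $V\in M_m(\mathbb{Z})$ be unimodular with $AV$ in column Hermite normal form, $V=[V_{\mathfrak a}\ \ V_{\mathfrak b}]$ with $V_{\mathfrak a}$ the first $r$ columns, and $W=V^{-1}=\begin{bmatrix}W_{\mathfrak a}\\ W_{\mathfrak b}\end{bmatrix}$ with $W_{\mathfrak a}$ the first $r$ rows. Let $P\in M_{m\times s}(\mathbb{Z})$. Then there exists a unimodular matrix $C\in M_{m-r}(\mathbb{Z})$ such that the first $s$ columns of $V_{\mathfrak b}C$ are exactly the columns of $P$ if and only if (1) $AP=0$, and (2) $W_{\mathfrak b}P\in M_{(m-r)\times s}(\mathbb{Z})$ can be extended to a unimodular matrix, i.e. there is an integer matrix $E'$ with $m-r-s$ columns such that $[W_{\mathfrak b}P\ \ E']$ is unimodular.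
   Context: A unimodular matrix is a square integer matrix with determinant $\pm1$. Column Hermite normal form: lower triangular integer matrix with zero columns on the right, positive pivots each strictly below the previous one, zeros to the right of each pivot and entries to its left in its row nonnegative and smaller than it. Interpretation: for a variable vector $x=(x_1,\dots,x_m)$ of the model (time, dependent variables, parameters) and scaling matrix $A$, the monomials $x^{c}=\prod_i x_i^{c_i}$ for the columns $c$ of $V_{\mathfrak b}$ form a generating set of the rational invariants of the scaling action $x\mapsto\lambda^A*x$; replacing $V_{\mathfrak b}$ by $V_{\mathfrak b}C$ with $C$ unimodular gives another such generating set, and the condition says the monomials $x^{p}$ for columns $p$ of $P$ can be taken as part of it. *)

From mathcomp Require Import all_boot all_order all_algebra.
Set Implicit Arguments. Unset Strict Implicit. Unset Printing Implicit Defensive.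
Import Order.TTheory GRing.Theory Num.Theory.
Local Open Scope ring_scope.

Definition unimodular (n : nat) (M : 'M[int]_n) : Prop :=
  \det M = 1 \/ \det M = -1.

Definition col_HNF (n p : nat) (H : 'M[int]_(n, p)) : Prop :=
  exists (c : nat) (piv : 'I_p -> 'I_n),
    (c <= p)%N /\
    (forall j : 'I_p, (c <= j)%N -> forall i : 'I_n, H i j = 0) /\
    (forall j1 j2 : 'I_p, (j1 < j2)%N -> (j2 < c)%N -> (piv j1 < piv j2)%N) /\
    (forall j : 'I_p, (j < c)%N ->
       0 < H (piv j) j /\
       (forall i : 'I_n, (i < piv j)%N -> H i j = 0) /\
       (forall j' : 'I_p, (j < j')%N -> H (piv j) j' = 0) /\
       (forall j' : 'I_p, (j' < j)%N -> 0 <= H (piv j) j' /\ H (piv j) j' < H (piv j) j)).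

Definition zrank (n p : nat) (A : 'M[int]_(n, p)) : nat :=
  \rank (map_mx (fun z : int => z%:~R : rat) A).

From mathcomp Require Import all_boot all_order all_algebra.
Set Implicit Arguments. Unset Strict Implicit. Unset Printing Implicit Defensive.
Import GRing.Theory Num.Theory.
Local Open Scope ring_scope.

(* Write W = V^-1 and m = r + k.  The pivots of a column Hermite normal form
   strictly descend, so A V has at most r nonzero columns: A V_b = 0, and since
   A has rank r the r x r block A V_a is invertible over Q.  Hence A X = 0 iff
   W_a X = 0, i.e. iff X = V_b (W_b X).  As W_b V_b = 1, the first s columns of
   V_b C are P exactly when those of C are W_b P, so the admissible C are the
   unimodular completions [W_b P  E]. *)

Lemma col_HNF_zero_cols (n p : nat) (H : 'M[int]_(n, p)) (i : 'I_n) (j : 'I_p) :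
  col_HNF H -> (n <= j)%N -> H i j = 0.
Proof.
move=> [c [piv [le_cp [zero_cols [piv_incr _]]]]] le_nj.
suff le_cn : (c <= n)%N by apply: zero_cols; apply: leq_trans le_nj.
have piv_ge : forall (l : nat) (lt_lc : (l < c)%N),
    (l <= piv (Ordinal (leq_trans lt_lc le_cp)))%N.
  elim=> [//|l IHl] lt_lc.
  have lt_l1c : (l < c)%N by apply: ltnW.
  apply: leq_ltn_trans (IHl lt_l1c) _.
  exact: piv_incr.
case: c le_cp {zero_cols piv_incr} piv_ge => [//|c] le_cp piv_ge.
exact: leq_ltn_trans (piv_ge c (ltnSn c)) (ltn_ord _).
Qed.

Definition ratmx (m n : nat) (M : 'M[int]_(m, n)) : 'M[rat]_(m, n) :=
  map_mx (fun z : int => z%:~R) M.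

Lemma ratmxM (m n p : nat) (M : 'M[int]_(m, n)) (N : 'M[int]_(n, p)) :
  ratmx (M *m N) = ratmx M *m ratmx N.
Proof. exact: map_mxM. Qed.

Lemma ratmx_inj (m n : nat) : injective (@ratmx m n).
Proof.
move=> M N /matrixP eqMN; apply/matrixP => i j.
by have := eqMN i j; rewrite !mxE => /intr_inj.
Qed.

Lemma unimodular_unitmx (n : nat) (M : 'M[int]_n) :
  unimodular M -> M \in unitmx.
Proof. by rewrite unitmxE => -[] ->; rewrite ?unitrN1 ?unitr1. Qed.

Lemma unimodular_ratmx_unit (n : nat) (M : 'M[int]_n) :
  unimodular M -> ratmx M \in unitmx.
Proof.
rewrite unitmxE /ratmx det_map_mx unitfE.
by case=> ->; rewrite ?rmorphN rmorph1 ?oppr_eq0 oner_eq0.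
Qed.

Section InverseBlocks.

Variables (R : comUnitRingType) (r k : nat) (V : 'M[R]_(r + k)).
Hypothesis V_unit : V \in unitmx.

Lemma dsubmx_invmx_rsubmx : dsubmx (invmx V) *m rsubmx V = 1%:M.
Proof.
rewrite mul_dsub_mx mulmx_rsub mulVmx //.
by apply/matrixP => i j; rewrite !mxE eq_rshift.
Qed.

Lemma rsubmx_dsubmx_invmxK (s : nat) (X : 'M[R]_(r + k, s)) :
  usubmx (invmx V *m X) = 0 -> rsubmx V *m (dsubmx (invmx V) *m X) = X.
Proof.
move=> WaX0; rewrite mul_dsub_mx -[RHS](mulKVmx V_unit).
set Y := invmx V *m X.
by rewrite -[in RHS](hsubmxK V) -[in RHS](vsubmxK Y) mul_row_col WaX0 mulmx0 add0r.
Qed.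

End InverseBlocks.

Section HermiteKernel.

Variables (r k : nat) (A : 'M[int]_(r, r + k)) (V : 'M[int]_(r + k)).
Hypotheses (rankA : zrank A = r) (V_unimod : unimodular V)
           (AV_HNF : col_HNF (A *m V)).

Lemma mulmx_rsubmx_HNF : A *m rsubmx V = 0.
Proof.
apply/matrixP => i j; rewrite mulmx_rsub mxE [RHS]mxE.
by rewrite (col_HNF_zero_cols _ AV_HNF) // leq_addr.
Qed.

Lemma ratmx_lsubmx_HNF_unit : ratmx (lsubmx (A *m V)) \in unitmx.
Proof.
have AV_split : A *m V = row_mx (lsubmx (A *m V)) 0.
  by rewrite -[LHS]hsubmxK -mulmx_rsub mulmx_rsubmx_HNF.
rewrite -row_free_unit; apply/eqP.
transitivity (\rank (ratmx (A *m V))).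
  by rewrite [in RHS]AV_split /ratmx map_row_mx map_mx0 rank_row_mx0.
by rewrite ratmxM mxrankMfree ?row_free_unit ?unimodular_ratmx_unit.
Qed.

Lemma HNF_ker_usubmx_invmx (s : nat) (X : 'M[int]_(r + k, s)) :
  A *m X = 0 -> usubmx (invmx V *m X) = 0.
Proof.
move=> AX0.
have lsub_ker : lsubmx (A *m V) *m usubmx (invmx V *m X) = 0.
  rewrite -AX0 -{2}(mulKVmx (unimodular_unitmx V_unimod) X) [A *m (V *m _)]mulmxA.
  rewrite -[in RHS](hsubmxK (A *m V)) -[in RHS](vsubmxK (invmx V *m X)).
  by rewrite mul_row_col -mulmx_rsub mulmx_rsubmx_HNF mul0mx addr0.
apply: ratmx_inj; rewrite -(mulKmx ratmx_lsubmx_HNF_unit (ratmx _)) -ratmxM.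
by rewrite lsub_ker /ratmx !map_mx0 mulmx0.
Qed.

End HermiteKernel.

Theorem mainTheorem4 (r s t : nat)
  (A : 'M[int]_(r, r + (s + t))) (V : 'M[int]_(r + (s + t)))
  (P : 'M[int]_(r + (s + t), s)) :
  (0 < s + t)%N ->
  zrank A = r ->
  unimodular V ->
  col_HNF (A *m V) ->
  (exists C : 'M[int]_(s + t),
      unimodular C /\ lsubmx (rsubmx V *m C) = P)
  <->
  (A *m P = 0 /\
   exists E : 'M[int]_(s + t, t),
     unimodular (row_mx (dsubmx (invmx V) *m P) E)).
Proof.
move=> _ rankA V_unimod AV_HNF.
have V_unit := unimodular_unitmx V_unimod.
split.
- move=> [C [C_unimod <-]]; rewrite -mulmx_lsub; split.
    by rewrite mulmxA (mulmx_rsubmx_HNF AV_HNF) mul0mx.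
  exists (rsubmx C).
  by rewrite mulmxA dsubmx_invmx_rsubmx // mul1mx hsubmxK.
- move=> [AP0 [E E_unimod]].
  exists (row_mx (dsubmx (invmx V) *m P) E); split => //.
  rewrite -mulmx_lsub row_mxKl rsubmx_dsubmx_invmxK //.
  exact: (HNF_ker_usubmx_invmx rankA V_unimod AV_HNF AP0).
Qed.
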